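(* Let $a,e\in\mathbb{R}$, $\omega>0$, and let $\alpha_i(t)$ ($i=1,\dots,4$) be scalar continuous functions (not necessarily odd). (i) Suppose $\alpha_3(t)$ is $\omega$-periodic, $a(a+e)<0$, and there exists $k\in\mathbb{Z}$ with $\int_0^\omega\alpha_3(s)\,ds=2\pi k$. Then the solution $$x(t)=\sqrt{-a(a+e)}\sin\Big(\int_0^t\alpha_3(s)ds\Big),\ y(t)=\sqrt{-a(a+e)}\cos\Big(\int_0^t\alpha_3(s)ds\Big),\ z(t)=-a$$ of the system $$\begin{aligned}\dot x&=(ax+xz)(1+\alpha_1(t))+x(a+z)\alpha_2(t)+y\alpha_3(t),\\ \dot y&=(ay+yz)(1+\alpha_1(t))+y(a+z)\alpha_2(t)-x\alpha_3(t),\\ \dot z&=(ez-x^2-y^2-z^2)(1+\alpha_1(t)+\alpha_2(t))\end{aligned}$$ is $\omega$-periodic (the period not necessarily minimal). (ii) Suppose $\alpha_3(t)+a^4\alpha_4(t)$ is $\omega$-periodic and there exists $k\in\mathbb{Z}$ with $\int_0^\omega(\alpha_3(s)+a^4\alpha_4(s))\,ds=2\pi k$. Then the solution $$x(t)=a\sin\Big(\int_0^t(\alpha_3(s)+a^4\alpha_4(s))ds\Big),\ y(t)=a\cos\Big(\int_0^t(\alpha_3(s)+a^4\alpha_4(s))ds\Big),\ z(t)=-a$$ of the system $$\begin{aligned}\dot x&=(ax+xz)(1+\alpha_1(t))+x(a+z)\alpha_2(t)+y\alpha_3(t)-y(x^2+y^2)(4az+x^2+y^2+2z^2)\alpha_4(t),\\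 \dot y&=(ay+yz)(1+\alpha_1(t))+y(a+z)\alpha_2(t)-x\alpha_3(t)+x(x^2+y^2)(4az+x^2+y^2+2z^2)\alpha_4(t),\\ \dot z&=-(2az+x^2+y^2+z^2)(1+\alpha_1(t)+\alpha_2(t))\end{aligned}$$ is $\omega$-periodic (the period not necessarily minimal). *)

From Stdlib Require Import Reals.
From Coquelicot Require Import Coquelicot.
Open Scope R_scope.

Definition periodic (f : R -> R) (w : R) : Prop := forall t, f (t + w) = f t.

Definition is_solution3 (F : R -> R -> R -> R -> R * R * R)
  (x y z : R -> R) : Prop :=
  forall t,
    let '(fx, fy, fz) := F t (x t) (y t) (z t) in
    is_derive x t fx /\ is_derive y t fy /\ is_derive z t fz.

Definition sys1 (a e : R) (al1 al2 al3 : R -> R) (t x y z : R) : R * R * R :=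
  ( (a*x + x*z)*(1 + al1 t) + x*(a+z)*al2 t + y*al3 t,
    (a*y + y*z)*(1 + al1 t) + y*(a+z)*al2 t - x*al3 t,
    (e*z - x^2 - y^2 - z^2)*(1 + al1 t + al2 t) ).

Definition sys2 (a : R) (al1 al2 al3 al4 : R -> R) (t x y z : R) : R * R * R :=
  ( (a*x + x*z)*(1 + al1 t) + x*(a+z)*al2 t + y*al3 t
      - y*(x^2+y^2)*(4*a*z + x^2 + y^2 + 2*z^2)*al4 t,
    (a*y + y*z)*(1 + al1 t) + y*(a+z)*al2 t - x*al3 t
      + x*(x^2+y^2)*(4*a*z + x^2 + y^2 + 2*z^2)*al4 t,
    - (2*a*z + x^2 + y^2 + z^2)*(1 + al1 t + al2 t) ).

(** Both curves run along a horizontal circle at the height [z = -a] with the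
    angular speed [b t] ([b = al3] in (i), [b = al3 + a^4 al4] in (ii)):
    [x = r sin th], [y = r cos th] with [th t = int_0^t b], so that
    [x' = b y], [y' = - b x], [z' = 0].  On that circle [a + z = 0] and
    [x^2 + y^2 = r^2], and with the chosen radius the right-hand sides of the
    two systems reduce to exactly [(b y, - b x, 0)].  Since [b] is
    [w]-periodic, [th (t + w) = th t + th w = th t + 2 pi k], which makes the
    curve [w]-periodic. *)

From Stdlib Require Import Reals Lra.
From Coquelicot Require Import Coquelicot.
Open Scope R_scope.

Lemma sin_plus_2PI_IZR (x : R) (k : Z) : sin (x + 2 * PI * IZR k) = sin x.
Proof.
  assert (sin_PIk : sin (PI * IZR k) = 0) by (apply sin_eq_0_1; exists k; ring).
  replace (2 * PI * IZR k) with (2 * (PI * IZR k)) by ring.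
  rewrite sin_plus, sin_2a, cos_2a_sin, sin_PIk; ring.
Qed.

Lemma cos_plus_2PI_IZR (x : R) (k : Z) : cos (x + 2 * PI * IZR k) = cos x.
Proof.
  assert (sin_PIk : sin (PI * IZR k) = 0) by (apply sin_eq_0_1; exists k; ring).
  replace (2 * PI * IZR k) with (2 * (PI * IZR k)) by ring.
  rewrite cos_plus, sin_2a, cos_2a_sin, sin_PIk; ring.
Qed.

Lemma circle_sum_sq (r th : R) : (r * sin th) ^ 2 + (r * cos th) ^ 2 = r ^ 2.
Proof.
  pose proof (sin2_cos2 th) as sc; unfold Rsqr in sc.
  replace (r ^ 2) with (r ^ 2 * (sin th * sin th + cos th * cos th))
    by (rewrite sc; ring).
  ring.
Qed.

Section RotationByPrimitive.

Variable f : R -> R.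
Hypothesis f_cont : forall t, continuous f t.

Lemma ex_RInt_cont (u v : R) : ex_RInt f u v.
Proof.
  apply (@ex_RInt_continuous R_CompleteNormedModule); intros; apply f_cont.
Qed.

Lemma is_derive_RInt0 (t : R) : is_derive (RInt f 0) t (f t).
Proof.
  apply (is_derive_RInt f (RInt f 0) 0); [|apply f_cont].
  apply filter_forall; intros.
  apply (@RInt_correct R_CompleteNormedModule), ex_RInt_cont.
Qed.

Lemma is_derive_scal_sin_RInt (r t : R) :
  is_derive (fun t => r * sin (RInt f 0 t)) t (r * cos (RInt f 0 t) * f t).
Proof.
  replace (r * cos (RInt f 0 t) * f t)
    with (r * scal (f t) (cos (RInt f 0 t))) by (cbn; unfold mult; cbn; ring).
  apply is_derive_scal, (@is_derive_comp R_AbsRing R_NormedModule).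
  - apply is_derive_sin.
  - apply is_derive_RInt0.
Qed.

Lemma is_derive_scal_cos_RInt (r t : R) :
  is_derive (fun t => r * cos (RInt f 0 t)) t (- (r * sin (RInt f 0 t)) * f t).
Proof.
  replace (- (r * sin (RInt f 0 t)) * f t)
    with (r * scal (f t) (- sin (RInt f 0 t))) by (cbn; unfold mult; cbn; ring).
  apply is_derive_scal, (@is_derive_comp R_AbsRing R_NormedModule).
  - apply is_derive_cos.
  - apply is_derive_RInt0.
Qed.

Lemma is_solution3_rotation (F : R -> R -> R -> R -> R * R * R) (r c : R) :
  (forall t, F t (r * sin (RInt f 0 t)) (r * cos (RInt f 0 t)) c =
             (r * cos (RInt f 0 t) * f t, - (r * sin (RInt f 0 t)) * f t, 0)) ->
  is_solution3 F (fun t => r * sin (RInt f 0 t)) (fun t => r * cos (RInt f 0 t))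
    (fun _ => c).
Proof.
  intros F_circle t; cbv beta; rewrite F_circle.
  split; [|split].
  - apply is_derive_scal_sin_RInt.
  - apply is_derive_scal_cos_RInt.
  - apply (is_derive_const (V := R_NormedModule)).
Qed.

Variable w : R.
Hypothesis f_periodic : periodic f w.

Lemma RInt_periodic_shift (t : R) : RInt f 0 (t + w) = RInt f 0 t + RInt f 0 w.
Proof.
  rewrite <- (RInt_Chasles f 0 w (t + w)) by apply ex_RInt_cont.
  change (RInt f 0 w + RInt f w (t + w) = RInt f 0 t + RInt f 0 w).
  rewrite Rplus_comm; f_equal.
  pose proof (RInt_comp_lin f 1 w 0 t (ex_RInt_cont _ _)) as shift.
  rewrite !Rmult_1_l, Rplus_0_l in shift; rewrite <- shift.
  apply RInt_ext; intros s _; cbn; unfold mult; cbn.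
  rewrite !Rmult_1_l; apply f_periodic.
Qed.

Variable k : Z.
Hypothesis f_turns : RInt f 0 w = 2 * PI * IZR k.

Lemma periodic_scal_sin_RInt (r : R) : periodic (fun t => r * sin (RInt f 0 t)) w.
Proof. intro t; rewrite RInt_periodic_shift, f_turns, sin_plus_2PI_IZR; reflexivity. Qed.

Lemma periodic_scal_cos_RInt (r : R) : periodic (fun t => r * cos (RInt f 0 t)) w.
Proof. intro t; rewrite RInt_periodic_shift, f_turns, cos_plus_2PI_IZR; reflexivity. Qed.

End RotationByPrimitive.

Lemma sys1_on_circle (a e : R) (al1 al2 al3 : R -> R) (t x y : R) :
  x ^ 2 + y ^ 2 = - (a * (a + e)) ->
  sys1 a e al1 al2 al3 t x y (- a) = (y * al3 t, - x * al3 t, 0).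
Proof.
  intros radius; unfold sys1.
  replace (e * - a - x ^ 2 - y ^ 2 - (- a) ^ 2) with 0 by lra.
  f_equal; [f_equal|]; ring.
Qed.

Lemma sys2_on_circle (a : R) (al1 al2 al3 al4 : R -> R) (t x y : R) :
  x ^ 2 + y ^ 2 = a ^ 2 ->
  sys2 a al1 al2 al3 al4 t x y (- a) =
    (y * (al3 t + a ^ 4 * al4 t), - x * (al3 t + a ^ 4 * al4 t), 0).
Proof.
  intros radius; unfold sys2.
  replace (4 * a * - a + x ^ 2 + y ^ 2 + 2 * (- a) ^ 2) with (- a ^ 2) by lra.
  replace (2 * a * - a + x ^ 2 + y ^ 2 + (- a) ^ 2) with 0 by lra.
  rewrite radius; f_equal; [f_equal|]; ring.
Qed.

Theorem theorem6 (a e w : R) (al1 al2 al3 al4 : R -> R)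
  (hw : 0 < w)
  (c1 : forall t, continuous al1 t) (c2 : forall t, continuous al2 t)
  (c3 : forall t, continuous al3 t) (c4 : forall t, continuous al4 t) :
  (* (i) *)
  (periodic al3 w -> a * (a + e) < 0 ->
   (exists k : Z, RInt al3 0 w = 2 * PI * IZR k) ->
   let x := fun t => sqrt (- (a * (a + e))) * sin (RInt al3 0 t) in
   let y := fun t => sqrt (- (a * (a + e))) * cos (RInt al3 0 t) in
   let z := fun _ : R => - a in
   is_solution3 (sys1 a e al1 al2 al3) x y z /\
   periodic x w /\ periodic y w /\ periodic z w)
  /\
  (* (ii) *)
  (let b := fun s => al3 s + a ^ 4 * al4 s in
   periodic b w ->
   (exists k : Z, RInt b 0 w = 2 * PI * IZR k) ->
   let x := fun t => a * sin (RInt b 0 t) in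
   let y := fun t => a * cos (RInt b 0 t) in
   let z := fun _ : R => - a in
   is_solution3 (sys2 a al1 al2 al3 al4) x y z /\
   periodic x w /\ periodic y w /\ periodic z w).
Proof.
  split.
  - intros al3_periodic ae_neg [k turns] x y z.
    assert (radius : sqrt (- (a * (a + e))) ^ 2 = - (a * (a + e)))
      by (apply pow2_sqrt; lra).
    split; [|split; [|split; [|intro t; reflexivity]]].
    + apply is_solution3_rotation; [exact c3|]; intro t.
      apply sys1_on_circle; rewrite circle_sum_sq; exact radius.
    + apply (periodic_scal_sin_RInt al3 c3 w al3_periodic k turns).
    + apply (periodic_scal_cos_RInt al3 c3 w al3_periodic k turns).
  - intros b b_periodic [k turns] x y z.
    assert (b_cont : forall t, continuous b t).
    { intro t; apply (continuous_plus (V := R_NormedModule)); [apply c3|].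
      apply (continuous_scal_r (V := R_NormedModule)), c4. }
    split; [|split; [|split; [|intro t; reflexivity]]].
    + apply is_solution3_rotation; [exact b_cont|]; intro t.
      apply sys2_on_circle, circle_sum_sq.
    + apply (periodic_scal_sin_RInt b b_cont w b_periodic k turns).
    + apply (periodic_scal_cos_RInt b b_cont w b_periodic k turns).
Qed.
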